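(* Let $R$ be a ring with identity and involution $*$, and let $a,b\in R$ be dual core invertible with dual core inverses $a_{\oplus}$ and $b_{\oplus}$. If $ab=0=ba$ and $ab^*=0$, then $a+b$ is dual core invertible and $(a+b)_{\oplus}=a_{\oplus}+b_{\oplus}$.
   Context: An involution on $R$ satisfies $(a^* )^*=a$, $(ab)^*=b^*a^*$, $(a+b)^*=a^*+b^*$. An element $x\in R$ is a dual core inverse of $a$ if $axa=a$, $xR=a^*R$ and $Rx=Ra$; it is unique when it exists and is denoted $a_{\oplus}$. *)

From HB Require Import structures.
From mathcomp Require Import all_boot all_algebra.
Set Implicit Arguments. Unset Strict Implicit. Unset Printing Implicit Defensive.
Import GRing.Theory.
Local Open Scope ring_scope.

Definition involution (R : pzRingType) (star : R -> R) : Prop :=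
  [/\ forall a, star (star a) = a,
      forall a b, star (a * b) = star b * star a &
      forall a b, star (a + b) = star a + star b].

Definition is_dual_core_inverse (R : pzRingType) (star : R -> R) (a x : R) : Prop :=
  [/\ a * x * a = a,
      (forall y : R, (exists r, y = x * r) <-> (exists r, y = star a * r)) &
      (forall y : R, (exists r, y = r * x) <-> (exists r, y = r * a))].

Definition dual_core_invertible (R : pzRingType) (star : R -> R) (a : R) : Prop :=
  exists x, is_dual_core_inverse star a x.

From HB Require Import structures.
From mathcomp Require Import all_boot all_algebra.
Set Implicit Arguments.
Unset Strict Implicit.
Import GRing.Theory.
Local Open Scope ring_scope.

(* Each of the three defining conditions for [a + b] and [x + y] splits into
   the corresponding conditions for [a], [x] and for [b], [y], because all the
   cross terms vanish: [x b = y a = 0] since [x] lies in [R a] and [y] in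
   [R b], and [b x = a y = 0] since [x] lies in [a^* R], [y] in [b^* R], and
   [b a^* = (a b^* )^* = 0]. *)

Section PrincipalIdeals.

Variable R : pzRingType.

Lemma rideal_eqP (u v : R) :
  (forall z : R, (exists r, z = u * r) <-> (exists r, z = v * r)) <->
  (exists s, u = v * s) /\ (exists t, v = u * t).
Proof.
split=> [eq_uv | [[s uE] [t vE]] z].
  by split; apply/eq_uv; exists 1; rewrite mulr1.
by split=> -[r ->]; [exists (s * r); rewrite uE | exists (t * r); rewrite vE];
  rewrite mulrA.
Qed.

Lemma lideal_eqP (u v : R) :
  (forall z : R, (exists r, z = r * u) <-> (exists r, z = r * v)) <->
  (exists s, u = s * v) /\ (exists t, v = t * u).
Proof.
split=> [eq_uv | [[s uE] [t vE]] z].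
  by split; apply/eq_uv; exists 1; rewrite mul1r.
by split=> -[r ->]; [exists (r * s); rewrite uE | exists (r * t); rewrite vE];
  rewrite mulrA.
Qed.

Lemma mulrDD_orth (a b c d : R) :
  a * d = 0 -> b * c = 0 -> (a + b) * (c + d) = a * c + b * d.
Proof. by move=> ad0 bc0; rewrite mulrDl !mulrDr ad0 bc0 addr0 add0r. Qed.

End PrincipalIdeals.

Section Involution.

Variables (R : pzRingType) (star : R -> R).
Hypothesis inv : involution star.

Lemma involution0 : star 0 = 0.
Proof.
have [_ _ starD] := inv.
by apply: (addrI (star 0)); rewrite -starD !addr0.
Qed.

Lemma involution_mul_eq0 (a b : R) : a * b = 0 -> star b * star a = 0.
Proof. by have [_ starM _] := inv; rewrite -starM => ->; exact: involution0. Qed.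

Section DualCoreInverse.

Variables a x : R.
Hypothesis ha : is_dual_core_inverse star a x.

Lemma dci_inner : a * x * a = a.
Proof. by case: ha. Qed.

Lemma dci_rideal : (exists s, x = star a * s) /\ (exists t, star a = x * t).
Proof. by case: ha => _ /rideal_eqP. Qed.

Lemma dci_lideal : (exists s, x = s * a) /\ (exists t, a = t * x).
Proof. by case: ha => _ _ /lideal_eqP. Qed.

Lemma dci_star_factor : star a * star x * x = x.
Proof.
have [_ starM _] := inv.
have [[s xE] _] := dci_rideal.
have star_inner : star a * star x * star a = star a.
  by rewrite -{3}dci_inner !starM mulrA.
by rewrite {2}xE mulrA star_inner -xE.
Qed.

(* [u := x a x - x] satisfies [u = a^* x^* u] and [x^* u = 0], the latter since
   [x^*] lies in [R a] and [a u = 0]. *)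
Lemma dci_outer : x * a * x = x.
Proof.
have [starK starM _] := inv.
have [[s xE] _] := dci_rideal.
set u := x * a * x - x.
have uE : u = star a * star x * u.
  by rewrite /u mulrBr -{1 3}dci_star_factor !mulrA.
have xstar_u : star x * u = 0.
  rewrite xE starM starK -mulrA /u mulrBr !mulrA dci_inner subrr.
  by rewrite mulr0.
by apply/eqP; rewrite -subr_eq0 -/u uE -mulrA xstar_u mulr0.
Qed.

Lemma dci_sqr_mul : x * x * a = x.
Proof.
have [[s xE] _] := dci_lideal.
by rewrite {1}xE -!mulrA (mulrA a) dci_inner -xE.
Qed.

End DualCoreInverse.

Section OrthogonalSum.

Variables a b x y : R.
Hypotheses (ha : is_dual_core_inverse star a x)
  (hb : is_dual_core_inverse star b y).
Hypotheses (ab0 : a * b = 0) (ba0 : b * a = 0) (ab_star0 : a * star b = 0).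

Lemma dci_orth_left : x * b = 0 /\ y * a = 0.
Proof.
have [[s xE] _] := dci_lideal ha; have [[t yE] _] := dci_lideal hb.
by rewrite xE yE -!mulrA ab0 ba0 !mulr0.
Qed.

Lemma dci_orth_right : b * x = 0 /\ a * y = 0.
Proof.
have [starK _ _] := inv.
have [[s xE] _] := dci_rideal ha; have [[t yE] _] := dci_rideal hb.
have b_star0 : b * star a = 0.
  by rewrite -[b]starK involution_mul_eq0.
by rewrite xE yE !mulrA b_star0 ab_star0 !mul0r.
Qed.

Lemma dci_add : is_dual_core_inverse star (a + b) (x + y).
Proof.
have [_ _ starD] := inv.
have [xb0 ya0] := dci_orth_left; have [bx0 ay0] := dci_orth_right.
split.
- rewrite mulrDD_orth // mulrDD_orth ?dci_inner //.
  + by rewrite -mulrA xb0 mulr0.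
  + by rewrite -mulrA ya0 mulr0.
- apply/rideal_eqP; split.
  + exists (star x * x + star y * y).
    rewrite starD mulrDD_orth; last 2 first.
    * by rewrite mulrA involution_mul_eq0 // mul0r.
    * by rewrite mulrA involution_mul_eq0 // mul0r.
    by rewrite !mulrA !dci_star_factor.
  + have [_ [s aE]] := dci_rideal ha; have [_ [t bE]] := dci_rideal hb.
    exists (a * x * s + b * y * t).
    rewrite mulrDD_orth; last 2 first.
    * by rewrite !mulrA xb0 !mul0r.
    * by rewrite !mulrA ya0 !mul0r.
    by rewrite starD aE bE !mulrA !dci_outer.
- apply/lideal_eqP; split.
  + exists (x * x + y * y).
    rewrite mulrDD_orth; last 2 first.
    * by rewrite -mulrA xb0 mulr0.
    * by rewrite -mulrA ya0 mulr0.
    by rewrite !dci_sqr_mul.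
  + have [_ [s aE]] := dci_lideal ha; have [_ [t bE]] := dci_lideal hb.
    exists (s * x * a + t * y * b).
    rewrite mulrDD_orth; last 2 first.
    * by rewrite -mulrA ay0 mulr0.
    * by rewrite -mulrA bx0 mulr0.
    by rewrite {1}aE {1}bE -!mulrA !(mulrA x) !(mulrA y) !dci_outer.
Qed.

End OrthogonalSum.

End Involution.

Theorem corollary4p9 (R : pzRingType) (star : R -> R) (a b ainv binv : R) :
  involution star ->
  is_dual_core_inverse star a ainv ->
  is_dual_core_inverse star b binv ->
  a * b = 0 -> b * a = 0 -> a * star b = 0 ->
  dual_core_invertible star (a + b) /\
  is_dual_core_inverse star (a + b) (ainv + binv).
Proof.
move=> inv ha hb ab0 ba0 ab_star0.
have hab := dci_add inv ha hb ab0 ba0 ab_star0.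
by split; first exists (ainv + binv).
Qed.
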